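(* The tensor product of effect algebras, $\otimes\colon\mathbf{EA}\times\mathbf{EA}\to\mathbf{EA}$, is a left Kan extension of the functor $E\circ *\colon\mathbf{FinBool}\times\mathbf{FinBool}\to\mathbf{EA}$ along $E\times E\colon\mathbf{FinBool}\times\mathbf{FinBool}\to\mathbf{EA}\times\mathbf{EA}$. That is, $$\otimes\cong\mathrm{Lan}_{E\times E}(E\circ * ).$$
   Context: Effect algebras are partial algebras $(A;+,0,1)$ satisfying the Foulis–Bennett axioms; one-element effect algebras are allowed. Morphisms preserve $1$ and defined sums; $\mathbf{EA}$ is the category. Boolean algebras are effect algebras via: $x+y$ is defined iff $x\wedge y=0$, and then $x+y=x\vee y$. For $[n]=\{1,\dots,n\}$, $\mathbf{FinBool}$ is the full subcategory of Boolean algebras on the objects $2^{[n]}$, $n\in\mathbb N$. $E\colon\mathbf{FinBool}\to\mathbf{EA}$ is the fully faithful inclusion, and $*\colon\mathbf{FinBool}\times\mathbf{FinBool}\to\mathbf{FinBool}$ is the coproduct (free product) of finite Boolean algebras. A bimorphism from $A,B$ to $C$ is a map $h\colon A\times B\to C$ with $h(1,1)=1$ that is additive (preserving orthogonality and sums) in each argument separately. The tensor product $A\otimes B$ is the universal (initial) bimorphism out of $A\times B$. It is functorial in $(A,B)$ via the universal property. *)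

From HB Require Import structures.
From mathcomp Require Import all_boot.
Set Implicit Arguments. Unset Strict Implicit. Unset Printing Implicit Defensive.

(** * Effect algebras (Foulis--Bennett).  The partial sum is [ea_sum : A -> A -> option A];
    [a + b] is defined iff [ea_sum a b = Some _]. One-element effect algebras are allowed. *)
Record EffAlg := {
  ea_car :> Type;
  ea_sum : ea_car -> ea_car -> option ea_car;
  ea_zero : ea_car;
  ea_one : ea_car;
  ea_comm : forall a b, ea_sum a b = ea_sum b a;
  ea_assoc : forall a b c bc, ea_sum b c = Some bc -> ea_sum a bc <> None ->
     exists ab, ea_sum a b = Some ab /\ ea_sum ab c = ea_sum a bc;
  ea_orthosupp : forall a, exists! a', ea_sum a a' = Some ea_one;
  ea_zero_one : forall a, ea_sum a ea_one <> None -> a = ea_zero }.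
Arguments ea_sum : clear implicits.
Arguments ea_zero : clear implicits.
Arguments ea_one : clear implicits.

Record EAHom (A B : EffAlg) := {
  eh :> A -> B;
  eh_one : eh (ea_one A) = ea_one B;
  eh_sum : forall a b c, ea_sum A a b = Some c -> ea_sum B (eh a) (eh b) = Some (eh c) }.

Lemma eh_id_one (A : EffAlg) : (fun x : A => x) (ea_one A) = ea_one A.
Proof. by []. Qed.
Lemma eh_id_sum (A : EffAlg) a b c : ea_sum A a b = Some c ->
  ea_sum A ((fun x : A => x) a) ((fun x : A => x) b) = Some ((fun x : A => x) c).
Proof. by []. Qed.
Definition EAid (A : EffAlg) : EAHom A A := Build_EAHom (@eh_id_one A) (@eh_id_sum A).

Section EAComp.
Variables (A B C : EffAlg) (g : EAHom B C) (f : EAHom A B).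
Lemma eh_comp_one : (fun x => g (f x)) (ea_one A) = ea_one C.
Proof. by rewrite /= !eh_one. Qed.
Lemma eh_comp_sum a b c : ea_sum A a b = Some c ->
  ea_sum C ((fun x => g (f x)) a) ((fun x => g (f x)) b) = Some ((fun x => g (f x)) c).
Proof. by move=> H; apply: eh_sum; apply: eh_sum. Qed.
Definition EAcomp : EAHom A C := Build_EAHom eh_comp_one eh_comp_sum.
End EAComp.

Record EABimor (A B C : EffAlg) := {
  bim :> A -> B -> C;
  bim_one : bim (ea_one A) (ea_one B) = ea_one C;
  bim_l : forall b a a' c, ea_sum A a a' = Some c ->
            ea_sum C (bim a b) (bim a' b) = Some (bim c b);
  bim_r : forall a b b' c, ea_sum B b b' = Some c ->
            ea_sum C (bim a b) (bim a b') = Some (bim a c) }.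

Section BimComp.
Variables (A B A' B' C : EffAlg) (h : EABimor A' B' C) (f : EAHom A A') (g : EAHom B B').
Lemma bimc_one : (fun a b => h (f a) (g b)) (ea_one A) (ea_one B) = ea_one C.
Proof. by rewrite /= !eh_one bim_one. Qed.
Lemma bimc_l b a a' c : ea_sum A a a' = Some c ->
  ea_sum C ((fun a b => h (f a) (g b)) a b) ((fun a b => h (f a) (g b)) a' b)
    = Some ((fun a b => h (f a) (g b)) c b).
Proof. by move=> H; apply: bim_l; apply: eh_sum. Qed.
Lemma bimc_r a b b' c : ea_sum B b b' = Some c ->
  ea_sum C ((fun a b => h (f a) (g b)) a b) ((fun a b => h (f a) (g b)) a b')
    = Some ((fun a b => h (f a) (g b)) a c).
Proof. by move=> H; apply: bim_r; apply: eh_sum. Qed.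
Definition bim_comp : EABimor A B C := Build_EABimor bimc_one bimc_l bimc_r.
End BimComp.

Record EATensor := {
  tens : EffAlg -> EffAlg -> EffAlg;
  tau : forall A B, EABimor A B (tens A B);
  tlift : forall A B C, EABimor A B C -> EAHom (tens A B) C;
  tlift_tau : forall A B C (h : EABimor A B C) a b, tlift h (tau A B a b) = h a b;
  tlift_uniq : forall A B C (h : EABimor A B C) (k : EAHom (tens A B) C),
     (forall a b, k (tau A B a b) = h a b) -> forall x, k x = tlift h x }.

Definition tmap (T : EATensor) (A A' B B' : EffAlg) (f : EAHom A A') (g : EAHom B B')
  : EAHom (tens T A B) (tens T A' B') :=
  tlift T (bim_comp (tau T A' B') f g).

(** * FinBool: objects [n : nat], standing for the Boolean algebra 2^[n] = {set 'I_n};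
    morphisms are Boolean algebra homomorphisms. *)
Record BHom (n m : nat) := {
  bh :> {set 'I_n} -> {set 'I_m};
  bh_one : bh setT = setT;
  bh_zero : bh set0 = set0;
  bh_join : forall X Y, bh (X :|: Y) = bh X :|: bh Y;
  bh_meet : forall X Y, bh (X :&: Y) = bh X :&: bh Y;
  bh_compl : forall X, bh (~: X) = ~: bh X }.

Section BComp.
Variables (n m k : nat) (g : BHom m k) (f : BHom n m).
Let c := fun X => g (f X).
Lemma bc_one : c setT = setT. Proof. by rewrite /c !bh_one. Qed.
Lemma bc_zero : c set0 = set0. Proof. by rewrite /c !bh_zero. Qed.
Lemma bc_join X Y : c (X :|: Y) = c X :|: c Y. Proof. by rewrite /c !bh_join. Qed.
Lemma bc_meet X Y : c (X :&: Y) = c X :&: c Y. Proof. by rewrite /c !bh_meet. Qed.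
Lemma bc_compl X : c (~: X) = ~: c X. Proof. by rewrite /c !bh_compl. Qed.
Definition bcomp : BHom n k := Build_BHom bc_one bc_zero bc_join bc_meet bc_compl.
End BComp.

Section BoolEA.
Variable n : nat.
Definition bsum (X Y : {set 'I_n}) : option {set 'I_n} :=
  if [disjoint X & Y] then Some (X :|: Y) else None.

Lemma bsum_comm X Y : bsum X Y = bsum Y X.
Proof. by rewrite /bsum disjoint_sym setUC. Qed.

Lemma disjsU (X Y Z : {set 'I_n}) :
  [disjoint X :|: Y & Z] = [disjoint X & Z] && [disjoint Y & Z].
Proof. by rewrite !disjoints_subset subUset. Qed.

Lemma bsum_assoc X Y Z YZ : bsum Y Z = Some YZ -> bsum X YZ <> None ->
  exists XY, bsum X Y = Some XY /\ bsum XY Z = bsum X YZ.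
Proof.
rewrite /bsum; case: ifP => // dYZ [<-]; case: ifP => // dX _.
move: dX; rewrite disjoint_sym disjsU => /andP[dYX dZX].
have dXY : [disjoint X & Y] by rewrite disjoint_sym.
exists (X :|: Y); rewrite dXY; split=> //.
have dXZ : [disjoint X & Z] by rewrite disjoint_sym.
by rewrite disjsU dXZ dYZ setUA.
Qed.

Lemma bsum_orthosupp X : exists! X', bsum X X' = Some setT.
Proof.
exists (~: X); split.
  by rewrite /bsum disjoints_subset setCK subxx setUCr.
move=> X'; rewrite /bsum; case: ifP => // d [HU].
apply/setP=> x; rewrite inE; move/setP: HU => /(_ x); rewrite !inE.
have := @disjointFr _ _ _ x d.
by case: (x \in X); case: (x \in X') => // /(_ isT).
Qed.

Lemma bsum_zero_one X : bsum X setT <> None -> X = set0.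
Proof.
rewrite /bsum; case: ifP => // d _; apply/setP=> x; rewrite inE.
by apply/negP=> Hx; have := disjointFr d Hx; rewrite inE.
Qed.

Definition BoolEA : EffAlg :=
  @Build_EffAlg {set 'I_n} bsum set0 setT bsum_comm bsum_assoc bsum_orthosupp bsum_zero_one.
End BoolEA.

Section EMap.
Variables (n m : nat) (f : BHom n m).
Lemma Emap_one : (f : BoolEA n -> BoolEA m) (ea_one (BoolEA n)) = ea_one (BoolEA m).
Proof. exact: bh_one. Qed.
Lemma Emap_sum X Y Z : ea_sum (BoolEA n) X Y = Some Z ->
  ea_sum (BoolEA m) (f X) (f Y) = Some (f Z).
Proof.
rewrite /= /bsum; case: ifP => // d [<-].
rewrite bh_join -setI_eq0 -bh_meet.
by move: d; rewrite -setI_eq0 => /eqP ->; rewrite bh_zero eqxx.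
Qed.
Definition Emap : EAHom (BoolEA n) (BoolEA m) :=
  @Build_EAHom (BoolEA n) (BoolEA m) f Emap_one Emap_sum.
End EMap.

Record FBCoproduct := {
  cp : nat -> nat -> nat;
  cinl : forall n m, BHom n (cp n m);
  cinr : forall n m, BHom m (cp n m);
  copair : forall n m k, BHom n k -> BHom m k -> BHom (cp n m) k;
  copair_l : forall n m k (f : BHom n k) (g : BHom m k) X, copair f g (cinl n m X) = f X;
  copair_r : forall n m k (f : BHom n k) (g : BHom m k) Y, copair f g (cinr n m Y) = g Y;
  copair_uniq : forall n m k (f : BHom n k) (g : BHom m k) (h : BHom (cp n m) k),
     (forall X, h (cinl n m X) = f X) -> (forall Y, h (cinr n m Y) = g Y) ->
     forall Z, h Z = copair f g Z }.

Definition cpmap (C : FBCoproduct) n n' m m' (f : BHom n n') (g : BHom m m')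
  : BHom (cp C n m) (cp C n' m') :=
  copair C (bcomp (cinl C n' m') f) (bcomp (cinr C n' m') g).

Record PreBifunctor := {
  bf_obj : EffAlg -> EffAlg -> EffAlg;
  bf_map : forall A A' B B', EAHom A A' -> EAHom B B' -> EAHom (bf_obj A B) (bf_obj A' B') }.

Definition IsBifunctor (G : PreBifunctor) : Prop :=
  (forall A A' B B' (f f' : EAHom A A') (g g' : EAHom B B'),
      (forall a, f a = f' a) -> (forall b, g b = g' b) ->
      forall x, bf_map G f g x = bf_map G f' g' x) /\
  (forall A B x, bf_map G (EAid A) (EAid B) x = x) /\
  (forall A A' A'' B B' B'' (f : EAHom A A') (f' : EAHom A' A'')
          (g : EAHom B B') (g' : EAHom B' B'') x,
      bf_map G (EAcomp f' f) (EAcomp g' g) x = bf_map G f' g' (bf_map G f g x)).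

Definition tensorPF (T : EATensor) : PreBifunctor :=
  {| bf_obj := tens T; bf_map := fun A A' B B' f g => @tmap T A A' B B' f g |}.

Definition NatFB (C : FBCoproduct) (G : PreBifunctor)
  (eta : forall n m, EAHom (BoolEA (cp C n m)) (bf_obj G (BoolEA n) (BoolEA m))) : Prop :=
  forall n n' m m' (f : BHom n n') (g : BHom m m') x,
    eta n' m' (Emap (cpmap C f g) x) = bf_map G (Emap f) (Emap g) (eta n m x).

Arguments NatFB : clear implicits.

Definition NatEA (L G : PreBifunctor)
  (s : forall A B, EAHom (bf_obj L A B) (bf_obj G A B)) : Prop :=
  forall A A' B B' (f : EAHom A A') (g : EAHom B B') x,
    s A' B' (bf_map L f g x) = bf_map G f g (s A B x).

Arguments NatEA : clear implicits.

Definition IsLeftKan (C : FBCoproduct) (L : PreBifunctor)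
  (eta : forall n m, EAHom (BoolEA (cp C n m)) (bf_obj L (BoolEA n) (BoolEA m))) : Prop :=
  forall (G : PreBifunctor), IsBifunctor G ->
  forall (alpha : forall n m, EAHom (BoolEA (cp C n m)) (bf_obj G (BoolEA n) (BoolEA m))),
    NatFB C G alpha ->
    exists s : forall A B, EAHom (bf_obj L A B) (bf_obj G A B),
      NatEA L G s /\
      (forall n m x, alpha n m x = s (BoolEA n) (BoolEA m) (eta n m x)) /\
      (forall s' : forall A B, EAHom (bf_obj L A B) (bf_obj G A B),
         NatEA L G s' ->
         (forall n m x, alpha n m x = s' (BoolEA n) (BoolEA m) (eta n m x)) ->
         forall A B y, s' A B y = s A B y).

Arguments IsLeftKan : clear implicits.

(* The unit eta : 2^[n] * 2^[m] -> 2^[n] (x) 2^[m] sends each atom {i} * {j} of the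
   free product to {i} (x) {j}; a morphism out of a finite Boolean algebra is determined
   by its values on atoms, which gives both its existence and its naturality.
   Given a natural alpha : E(2^[n] * 2^[m]) -> G(2^[n], 2^[m]), put
   h(a, b) := G(a, b)(alpha({0} * {0})), reading a, b as morphisms out of 2^[2], the free
   effect algebra on one generator. Naturality of alpha gives
   h(F X, F' Y) = G(F, F')(alpha(X * Y)) for all morphisms F, F' out of finite Boolean
   algebras; since every defined sum a + a' is the image of a disjoint union in 2^[3],
   h is a bimorphism. The induced morphism A (x) B -> G(A, B) factors alpha through eta,
   and any natural factorisation must send a (x) b to h(a, b). *)

From HB Require Import structures.
From mathcomp Require Import all_boot.
From Stdlib Require Import ClassicalEpsilon.
Set Implicit Arguments. Unset Strict Implicit. Unset Printing Implicit Defensive.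

Section EffectAlgebraTheory.
Variable D : EffAlg.
Implicit Types a b c : D.

Lemma ea_osupp_uniq a b c :
  ea_sum D a b = Some (ea_one D) -> ea_sum D a c = Some (ea_one D) -> b = c.
Proof. by case: (ea_orthosupp a) => a' [_ U] /U <- /U <-. Qed.

Lemma ea_sum0l a : ea_sum D (ea_zero D) a = Some a.
Proof.
have one0 : ea_sum D (ea_one D) (ea_zero D) = Some (ea_one D).
  case: (ea_orthosupp (ea_one D)) => o [Ho _].
  by rewrite -(@ea_zero_one _ o) // ea_comm Ho.
case: (ea_orthosupp a) => a' [Ha _].
have def01 : ea_sum D (ea_zero D) (ea_one D) <> None by rewrite ea_comm one0.
have [b [-> Hb]] := ea_assoc Ha def01.
by rewrite (@ea_osupp_uniq a' b a) // ea_comm // Hb ea_comm one0.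
Qed.

Lemma ea_sum0r a : ea_sum D a (ea_zero D) = Some a.
Proof. by rewrite ea_comm ea_sum0l. Qed.

Lemma ea_assoc_r a b c ab : ea_sum D a b = Some ab -> ea_sum D ab c <> None ->
  exists bc, ea_sum D b c = Some bc /\ ea_sum D a bc = ea_sum D ab c.
Proof.
rewrite ea_comm => Hba; rewrite ea_comm => /(ea_assoc Hba) [cb [Hcb E]].
by exists cb; rewrite ea_comm Hcb ea_comm E.
Qed.

Lemma ea_sum_inj a b c s : ea_sum D a b = Some s -> ea_sum D a c = Some s -> b = c.
Proof.
move=> Hb Hc; case: (ea_orthosupp s) => s' [Hs _].
have defs : ea_sum D s s' <> None by rewrite Hs.
have [t [Ht Hat]] := ea_assoc_r Hb defs.
have [t' [Ht' Hat']] := ea_assoc_r Hc defs.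
rewrite Hs in Hat Hat'; rewrite (ea_osupp_uniq Hat Hat') in Ht.
have deft : ea_sum D t' a <> None by rewrite ea_comm Hat'.
have [u [Hu Hbu]] := ea_assoc_r Ht deft.
have [u' [Hu' Hcu]] := ea_assoc_r Ht' deft.
rewrite Hu in Hu'; case: Hu' => <- in Hcu.
rewrite [ea_sum D t' a]ea_comm Hat' in Hbu Hcu.
by apply: (@ea_osupp_uniq u); rewrite ea_comm.
Qed.

Lemma ea_sum_idem a : ea_sum D a a = Some a -> a = ea_zero D.
Proof. by move/ea_sum_inj; apply; rewrite ea_sum0r. Qed.

Definition ea_compl a : D :=
  proj1_sig (constructive_definite_description _ (ea_orthosupp a)).

Lemma ea_complP a : ea_sum D a (ea_compl a) = Some (ea_one D).
Proof. by rewrite /ea_compl; case: constructive_definite_description. Qed.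

End EffectAlgebraTheory.

(* Partial sums become total on [option D], with [None] absorbing; this makes
   finite sums in an effect algebra an instance of [\big]. *)
Definition osum (D : EffAlg) (o1 o2 : option D) : option D :=
  match o1, o2 with Some a, Some b => ea_sum D a b | _, _ => None end.

Section OptionSum.
Variable D : EffAlg.

Lemma osumC : commutative (@osum D).
Proof. by case=> [a|] [b|] //=; rewrite ea_comm. Qed.

Lemma osum0o : left_id (Some (ea_zero D)) (@osum D).
Proof. by case=> [a|] //=; rewrite ea_sum0l. Qed.

Lemma osumA : associative (@osum D).
Proof.
case=> [a|] [b|] [c|] //=; try by case: (ea_sum D a b).
case Ebc: (ea_sum D b c) => [bc|] /=; case Eab: (ea_sum D a b) => [ab|] //=.
- case Ea_bc: (ea_sum D a bc) => [r|].
    have [|ab' [Eab' E]] := ea_assoc (a := a) Ebc; first by rewrite Ea_bc.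
    by rewrite Eab in Eab'; case: Eab' E => <-; congruence.
  case Eab_c: (ea_sum D ab c) => [r|] //.
  have [|bc' [Ebc' E]] := ea_assoc_r (c := c) Eab; first by rewrite Eab_c.
  by rewrite Ebc in Ebc'; case: Ebc' E => <-; congruence.
- case Ea_bc: (ea_sum D a bc) => [r|] //.
  by have [|ab' []] := ea_assoc (a := a) Ebc; rewrite ?Ea_bc ?Eab.
- case Eab_c: (ea_sum D ab c) => [r|] //.
  by have [|bc' []] := ea_assoc_r (c := c) Eab; rewrite ?Eab_c ?Ebc.
Qed.

HB.instance Definition _ := Monoid.isComLaw.Build (option D) (Some (ea_zero D)) (@osum D)
  osumA osumC osum0o.

End OptionSum.

Local Notation "\esum_ ( i 'in' A ) F" := (\big[@osum _/Some (ea_zero _)]_(i in A) F)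
  (at level 41, F at level 41, i, A at level 50).
Local Notation "\esum_ ( i | P ) F" := (\big[@osum _/Some (ea_zero _)]_(i | P) F)
  (at level 41, F at level 41, i at level 50).
Local Notation "\esum_ ( i < n ) F" := (\big[@osum _/Some (ea_zero _)]_(i < n) F)
  (at level 41, F at level 41, i, n at level 50).
Local Notation "\esum_ ( i : t ) F" := (\big[@osum _/Some (ea_zero _)]_(i : t) F)
  (at level 41, F at level 41, i at level 50).
Local Notation "\esum_ i F" := (\big[@osum _/Some (ea_zero _)]_i F)
  (at level 41, F at level 41, i at level 0, right associativity).

Definition additive n (D : EffAlg) (f : {set 'I_n} -> D) :=
  forall X Y Z, bsum X Y = Some Z -> ea_sum D (f X) (f Y) = Some (f Z).

Section BoolAdditive.
Variables (n : nat) (D : EffAlg).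
Implicit Types (f g : {set 'I_n} -> D) (X Y Z : {set 'I_n}).

Lemma eh_additive (h : EAHom (BoolEA n) D) : additive h.
Proof. by move=> X Y Z H; apply: eh_sum. Qed.

Lemma additive_comp (E : EffAlg) (h : EAHom D E) f :
  additive f -> additive (fun X => h (f X)).
Proof. by move=> Hf X Y Z /Hf; apply: eh_sum. Qed.

Lemma bsum_set0 X : bsum set0 X = Some X.
Proof. by rewrite /bsum disjoints_subset sub0set set0U. Qed.

Lemma additive_set0 f : additive f -> f set0 = ea_zero D.
Proof. by move=> Hf; apply/ea_sum_idem/Hf/bsum_set0. Qed.

Lemma bsum_setD1 x X : x \in X -> bsum [set x] (X :\ x) = Some X.
Proof. by move=> xX; rewrite /bsum disjoints1 !inE eqxx setD1K. Qed.

Lemma additive_big f Z : additive f -> \esum_(x in Z) Some (f [set x]) = Some (f Z).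
Proof.
move=> Hf; elim: {Z}_.+1 {-2}Z (ltnSn #|Z|) => // k IH Z.
have [->|[x xZ]] := set_0Vmem Z; first by rewrite big_set0 additive_set0.
rewrite ltnS (cardsD1 x) xZ (big_setD1 x xZ) /= => /IH ->.
exact/Hf/bsum_setD1.
Qed.

Lemma additive_ext f g : additive f -> additive g ->
  (forall x, f [set x] = g [set x]) -> f =1 g.
Proof.
move=> Hf Hg E Z; have := additive_big Z Hf.
by rewrite (eq_bigr _ (fun x _ => congr1 Some (E x))) additive_big // => -[].
Qed.

End BoolAdditive.

Lemma additive_bigT n (D : EffAlg) (f : {set 'I_n} -> D) :
  additive f -> \esum_x Some (f [set x]) = Some (f setT).
Proof. by move/(additive_big setT) <-; apply: eq_bigl => x; rewrite inE. Qed.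

Section DecompHom.
Variables (k : nat) (D : EffAlg) (d : 'I_k -> option D).
Hypothesis d_one : \esum_i d i = Some (ea_one D).

Definition decomp_fun (Z : {set 'I_k}) : D := odflt (ea_zero D) (\esum_(i in Z) d i).

Lemma decomp_funE (Z : {set 'I_k}) : \esum_(i in Z) d i = Some (decomp_fun Z).
Proof.
by move: d_one; rewrite /decomp_fun (bigID (mem Z)) /=; case: (\esum_(i in Z) d i).
Qed.

Lemma decomp_fun_one : decomp_fun setT = ea_one D.
Proof. by rewrite /decomp_fun (eq_bigl xpredT) ?d_one // => i; rewrite inE. Qed.

Lemma decomp_fun_sum (X Y Z : {set 'I_k}) :
  bsum X Y = Some Z -> ea_sum D (decomp_fun X) (decomp_fun Y) = Some (decomp_fun Z).
Proof.
rewrite /bsum; case: ifP => // dXY [<-]; rewrite -decomp_funE.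
change (osum (Some (decomp_fun X)) (Some (decomp_fun Y)) = \esum_(i in X :|: Y) d i).
by rewrite -!decomp_funE -bigU //; apply: eq_bigl => i; rewrite !inE.
Qed.

Definition decomp_hom : EAHom (BoolEA k) D :=
  @Build_EAHom (BoolEA k) D decomp_fun decomp_fun_one decomp_fun_sum.

Lemma decomp_hom1 i : d i = Some (decomp_hom [set i]).
Proof. by rewrite /= -decomp_funE big_set1. Qed.

End DecompHom.

Section EltHom.
Variable D : EffAlg.

Lemma hom2_osupp (f : EAHom (BoolEA 2) D) :
  ea_sum D (f [set ord0]) (f [set ord_max]) = Some (ea_one D).
Proof.
rewrite -(eh_one f); apply: eh_sum => /=.
rewrite /bsum disjoints1 !inE; congr Some.
by apply/setP => i; rewrite !inE; case: i => [[|[|]]].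
Qed.

Lemma hom2_ext (f g : EAHom (BoolEA 2) D) : f [set ord0] = g [set ord0] -> f =1 g.
Proof.
move=> E; apply: additive_ext; try exact: eh_additive.
case=> [[|[|//]] lt_i2].
  by rewrite (_ : Ordinal lt_i2 = ord0) //; apply: val_inj.
rewrite (_ : Ordinal lt_i2 = ord_max); last exact: val_inj.
apply: (@ea_osupp_uniq _ (f [set ord0])); first exact: hom2_osupp.
by rewrite E hom2_osupp.
Qed.

Lemma elt_decomp_one (a : D) :
  \esum_(i < 2) Some (if i == ord0 then a else ea_compl a) = Some (ea_one D).
Proof. by rewrite !big_ord_recl big_ord0 /= ea_sum0r ea_complP. Qed.

Definition elt_hom (a : D) : EAHom (BoolEA 2) D := decomp_hom (elt_decomp_one a).

Lemma elt_hom0 a : elt_hom a [set ord0] = a.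
Proof. by case: (decomp_hom1 (elt_decomp_one a) ord0) => /esym. Qed.

Lemma elt_homE (f : EAHom (BoolEA 2) D) : f =1 elt_hom (f [set ord0]).
Proof. by apply: hom2_ext; rewrite elt_hom0. Qed.

End EltHom.

Lemma elt_hom_comp (D E : EffAlg) (f : EAHom D E) (a : D) :
  elt_hom (f a) =1 EAcomp f (elt_hom a).
Proof. by apply: hom2_ext; rewrite elt_hom0 -[in LHS](elt_hom0 a). Qed.

Lemma ea_sum_image3 (D : EffAlg) (a b c : D) : ea_sum D a b = Some c ->
  exists F : EAHom (BoolEA 3) D, exists X Y : {set 'I_3},
    [/\ bsum X Y = Some (X :|: Y), F X = a, F Y = b & F (X :|: Y) = c].
Proof.
move=> Eab; pose d (i : 'I_3) := Some (nth (ea_zero D) [:: a; ea_compl c; b] i).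
have d_one : \esum_(i < 3) d i = Some (ea_one D).
  rewrite !big_ord_recl big_ord0 /d /= ea_sum0r (@ea_comm _ (ea_compl c)).
  have := osumA (Some a) (Some b) (Some (ea_compl c)).
  by rewrite /= Eab => ->; apply: ea_complP.
have XY : bsum [set ord0 : 'I_3] [set ord_max] = Some ([set ord0] :|: [set ord_max]).
  by rewrite /bsum disjoints1 inE.
have Fa : decomp_hom d_one [set ord0] = a by case: (decomp_hom1 d_one ord0) => /esym.
have Fb : decomp_hom d_one [set ord_max] = b by case: (decomp_hom1 d_one ord_max) => /esym.
exists (decomp_hom d_one), [set ord0], [set ord_max]; split=> //.
by have := eh_sum (decomp_hom d_one) XY; rewrite Fa Fb Eab => -[].
Qed.

Definition preim_bhom k n (p : 'I_k -> 'I_n) : BHom n k :=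
  Build_BHom (preimsetT p) (preimset0 p) (preimsetU p) (preimsetI p) (preimsetC p).

Definition point_bhom k (z : 'I_k) : BHom k 1 := preim_bhom (fun _ : 'I_1 => z).

Definition set_bhom k (X : {set 'I_k}) : BHom 2 k :=
  preim_bhom (fun x => if x \in X then ord0 else ord_max).

Lemma set_bhom0 k (X : {set 'I_k}) : set_bhom X [set ord0] = X.
Proof. by apply/setP => x; rewrite !inE; case: (x \in X). Qed.

Section BHomSet1.
Variables (n k : nat) (f : BHom n k).

Lemma bh_memE z i (X : {set 'I_n}) : z \in f [set i] -> (z \in f X) = (i \in X).
Proof.
move=> zi; have [iX|niX] := boolP (i \in X).
  by rewrite -(setUidPr (_ : [set i] \subset X)) ?sub1set // bh_join inE zi.
apply/negbTE/negP => zX.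
have : z \in f ([set i] :&: X) by rewrite bh_meet inE zi.
have -> : [set i] :&: X = set0.
  by apply/setP => y; rewrite !inE; case: eqP => // ->; rewrite (negbTE niX).
by rewrite bh_zero inE.
Qed.

Lemma bh_set1_inj z i j : z \in f [set i] -> z \in f [set j] -> i = j.
Proof. by move=> zi; rewrite (bh_memE _ zi) inE => /eqP. Qed.

Lemma bh_set1_cover z : exists i, z \in f [set i].
Proof.
have cover1 : \bigcup_i [set i] = [set: 'I_n].
  by apply/setP => y; rewrite inE; apply/bigcupP; exists y; rewrite ?inE.
have : z \in f (\bigcup_i [set i]) by rewrite cover1 bh_one inE.
by rewrite (big_morph f (bh_join f) (bh_zero f)) => /bigcupP [i _ zi]; exists i.
Qed.

End BHomSet1.

Lemma bh_meet_additive n k (f : BHom n k) (Y : {set 'I_k}) :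
  @additive n (BoolEA k) (fun X => f X :&: Y).
Proof.
move=> X1 X2 X3; rewrite /= /bsum; case: ifP => // dX [<-].
have dfX : [disjoint f X1 & f X2].
  by rewrite -setI_eq0 -bh_meet (disjoint_setI0 dX) bh_zero.
by rewrite (disjointWl (subsetIl _ _) (disjointWr (subsetIl _ _) dfX)) bh_join setIUl.
Qed.

Section CoproductRect.
Variables (C : FBCoproduct) (n m : nat).
Implicit Types (X : {set 'I_n}) (Y : {set 'I_m}) (i : 'I_n) (j : 'I_m) (z : 'I_(cp C n m)).

Definition rect X Y : {set 'I_(cp C n m)} := cinl C n m X :&: cinr C n m Y.

Lemma rect_additive_l Y : @additive n (BoolEA (cp C n m)) (rect^~ Y).
Proof. exact: bh_meet_additive. Qed.

Lemma rect_additive_r X : @additive m (BoolEA (cp C n m)) (rect X).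
Proof.
by move=> Y1 Y2 Y3; rewrite /rect ![cinl C n m X :&: _]setIC; apply: bh_meet_additive.
Qed.

Lemma rectT : rect setT setT = setT.
Proof. by rewrite /rect !bh_one setIid. Qed.

(* The point evaluations at [z] and [z'] agree after both injections, hence agree by
   uniqueness of copairing. *)
Lemma rect_set1_sep i j z z' :
  z \in rect [set i] [set j] -> z' \in rect [set i] [set j] -> z = z'.
Proof.
rewrite !inE => /andP [zl zr] /andP [z'l z'r].
have El X : point_bhom z' (cinl C n m X) = bcomp (point_bhom z) (cinl C n m) X.
  by apply/setP => u; rewrite !inE (bh_memE _ zl) (bh_memE _ z'l).
have Er Y : point_bhom z' (cinr C n m Y) = bcomp (point_bhom z) (cinr C n m) Y.
  by apply/setP => u; rewrite !inE (bh_memE _ zr) (bh_memE _ z'r).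
have := copair_uniq El Er [set z].
rewrite -(copair_uniq (f := bcomp (point_bhom z) (cinl C n m))
  (g := bcomp (point_bhom z) (cinr C n m)) (h := point_bhom z)
  (fun _ => erefl) (fun _ => erefl)).
by move/setP/(_ ord0); rewrite !inE eqxx => /eqP ->.
Qed.

Lemma rect_set1_nonempty i j : exists z, z \in rect [set i] [set j].
Proof.
apply/set0Pn/negP => /eqP rect0.
have := congr1 (copair C (point_bhom i) (point_bhom j)) rect0.
rewrite bh_meet copair_l copair_r bh_zero => /setP /(_ ord0).
by rewrite !inE !eqxx.
Qed.

Lemma rect_set1 i j : exists z, rect [set i] [set j] = [set z].
Proof.
have [z zij] := rect_set1_nonempty i j; exists z; apply/setP => u; rewrite in_set1.
by apply/idP/eqP => [uij|->//]; apply: rect_set1_sep uij zij.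
Qed.

Lemma rect_set1_inj i j i' j' z :
  z \in rect [set i] [set j] -> z \in rect [set i'] [set j'] -> i = i' /\ j = j'.
Proof.
rewrite !inE => /andP [zi zj] /andP [zi' zj'].
by split; [apply: bh_set1_inj zi zi' | apply: bh_set1_inj zj zj'].
Qed.

Lemma set1_rect z : exists i j, [set z] = rect [set i] [set j].
Proof.
have [[i zi] [j zj]] := (bh_set1_cover (cinl C n m) z, bh_set1_cover (cinr C n m) z).
exists i, j; have [z0 E] := rect_set1 i j.
have : z \in rect [set i] [set j] by rewrite inE zi zj.
by rewrite E inE => /eqP ->.
Qed.

End CoproductRect.

Lemma cpmap_rect (C : FBCoproduct) n n' m m' (f : BHom n n') (g : BHom m m') X Y :
  cpmap C f g (rect C X Y) = rect C (f X) (g Y).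
Proof. by rewrite bh_meet /cpmap copair_l copair_r. Qed.

Lemma bim_additive_l n (B D : EffAlg) (h : EABimor (BoolEA n) B D) b :
  additive (fun X => h X b).
Proof. by move=> X Y Z H; apply: bim_l. Qed.

Lemma bim_additive_r n (A D : EffAlg) (h : EABimor A (BoolEA n) D) a :
  additive (fun Y => h a Y).
Proof. by move=> X Y Z H; apply: bim_r. Qed.

Section TensorEta.
Variables (C : FBCoproduct) (T : EATensor) (n m : nat).
Local Notation tau := (tau T (BoolEA n) (BoolEA m)).

Lemma tau_atoms_sum :
  \esum_(p : 'I_n * 'I_m) Some (tau [set p.1] [set p.2]) = Some (ea_one _).
Proof.
rewrite -(pair_bigA _ (fun i j => Some (tau [set i] [set j]))).
rewrite (eq_bigr _ (fun i _ => additive_bigT (bim_additive_r tau [set i]))).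
by rewrite (additive_bigT (bim_additive_l tau setT)) bim_one.
Qed.

(* The atom of 2^[n] * 2^[m] containing [z] is {i} * {j} for a unique pair (i, j),
   so this sum has exactly one term. *)
Definition eta_atom (z : 'I_(cp C n m)) : option (tens T (BoolEA n) (BoolEA m)) :=
  \esum_(p | z \in rect C [set p.1] [set p.2]) Some (tau [set p.1] [set p.2]).

Lemma eta_atom_one : \esum_z eta_atom z = Some (ea_one _).
Proof.
rewrite /eta_atom (exchange_big_dep predT) //= -tau_atoms_sum.
apply: eq_bigr => p _; have [z0 E] := rect_set1 C p.1 p.2.
by rewrite (big_pred1 z0) // => z; rewrite /= E inE.
Qed.

Definition tens_eta : EAHom (BoolEA (cp C n m)) (tens T (BoolEA n) (BoolEA m)) :=
  decomp_hom eta_atom_one.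

Lemma tens_eta_atom i j : tens_eta (rect C [set i] [set j]) = tau [set i] [set j].
Proof.
have [z0 E] := rect_set1 C i j; rewrite E.
have z0ij : z0 \in rect C [set i] [set j] by rewrite E inE.
have only_ij : (fun p : 'I_n * 'I_m => z0 \in rect C [set p.1] [set p.2]) =1 pred1 (i, j).
  move=> [i' j'] /=; apply/idP/eqP => [z0ij'|[-> ->] //].
  by have [-> ->] := rect_set1_inj z0ij' z0ij.
have := decomp_hom1 eta_atom_one z0.
by rewrite /eta_atom (big_pred1 _ only_ij) => -[/esym].
Qed.

Lemma tens_eta_rect X Y : tens_eta (rect C X Y) = tau X Y.
Proof.
move: X; apply: additive_ext => [||i].
- exact: additive_comp (rect_additive_l C Y).
- exact: (bim_additive_l tau).
move: Y; apply: additive_ext => [||j].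
- exact: additive_comp (rect_additive_r C [set i]).
- exact: (bim_additive_r tau).
exact: tens_eta_atom.
Qed.

End TensorEta.

Section HomBim.
Variables (A B D E : EffAlg) (k : EAHom D E) (h : EABimor A B D).

Lemma hom_bim_one : k (h (ea_one A) (ea_one B)) = ea_one E.
Proof. by rewrite bim_one eh_one. Qed.

Lemma hom_bim_l b a a' c : ea_sum A a a' = Some c ->
  ea_sum E (k (h a b)) (k (h a' b)) = Some (k (h c b)).
Proof. by move/(bim_l h b)/(eh_sum k). Qed.

Lemma hom_bim_r a b b' c : ea_sum B b b' = Some c ->
  ea_sum E (k (h a b)) (k (h a b')) = Some (k (h a c)).
Proof. by move/(bim_r h a)/(eh_sum k). Qed.

Definition hom_bim : EABimor A B E :=
  @Build_EABimor A B E (fun a b => k (h a b)) hom_bim_one hom_bim_l hom_bim_r.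

End HomBim.

Section TensorHoms.
Variable T : EATensor.

Lemma tens_hom_ext A B D (k k' : EAHom (tens T A B) D) :
  (forall a b, k (tau T A B a b) = k' (tau T A B a b)) -> k =1 k'.
Proof.
move=> E x; rewrite (tlift_uniq (h := hom_bim k' (tau T A B)) E).
exact/esym/(tlift_uniq (h := hom_bim k' (tau T A B))).
Qed.

Lemma tmap_tau A A' B B' (f : EAHom A A') (g : EAHom B B') a b :
  tmap T f g (tau T A B a b) = tau T A' B' (f a) (g b).
Proof. exact: tlift_tau. Qed.

Lemma tens_eta_natural (C : FBCoproduct) : NatFB C (tensorPF T) (tens_eta C T).
Proof.
move=> n n' m m' f g; apply: additive_ext => [||z].
- by apply: additive_comp; apply: eh_additive.
- by apply: additive_comp; apply: eh_additive.
have [i [j ->]] := set1_rect z.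
rewrite -[Emap _ _]/(cpmap C f g _) cpmap_rect !tens_eta_rect.
exact/esym/tmap_tau.
Qed.

End TensorHoms.

Section KanFactor.
Variables (C : FBCoproduct) (T : EATensor) (G : PreBifunctor).
Hypothesis G_bif : IsBifunctor G.
Variable alpha : forall n m, EAHom (BoolEA (cp C n m)) (bf_obj G (BoolEA n) (BoolEA m)).
Hypothesis alpha_nat : NatFB C G alpha.

Let G_ext := proj1 G_bif.
Let G_id := proj1 (proj2 G_bif).
Let G_comp := proj2 (proj2 G_bif).

Definition kan_fun (A B : EffAlg) (a : A) (b : B) : bf_obj G A B :=
  bf_map G (elt_hom a) (elt_hom b) (alpha 2 2 (rect C [set ord0] [set ord0])).

Lemma kan_fun_rect (A B : EffAlg) k l (F : EAHom (BoolEA k) A) (F' : EAHom (BoolEA l) B)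
    X Y :
  kan_fun (F X) (F' Y) = bf_map G F F' (alpha k l (rect C X Y)).
Proof.
rewrite /kan_fun (G_ext (f' := EAcomp F (Emap (set_bhom X)))
  (g' := EAcomp F' (Emap (set_bhom Y)))).
- by rewrite G_comp -alpha_nat [Emap _ _]cpmap_rect (set_bhom0 X) (set_bhom0 Y).
- move=> Z; rewrite [RHS]elt_homE; congr (elt_hom _ Z).
  by rewrite -[in LHS](set_bhom0 X).
- move=> Z; rewrite [RHS]elt_homE; congr (elt_hom _ Z).
  by rewrite -[in LHS](set_bhom0 Y).
Qed.

Lemma kan_fun_one (A B : EffAlg) : kan_fun (ea_one A) (ea_one B) = ea_one (bf_obj G A B).
Proof.
rewrite -(eh_one (elt_hom (ea_one A))) -(eh_one (elt_hom (ea_one B))) kan_fun_rect.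
by rewrite rectT !eh_one.
Qed.

Lemma kan_fun_l (A B : EffAlg) (b : B) (a a' c : A) : ea_sum A a a' = Some c ->
  ea_sum (bf_obj G A B) (kan_fun a b) (kan_fun a' b) = Some (kan_fun c b).
Proof.
case/ea_sum_image3 => F [X [Y [XY <- <- <-]]].
rewrite -(elt_hom0 b) !kan_fun_rect; apply/eh_sum/eh_sum.
exact: rect_additive_l.
Qed.

Lemma kan_fun_r (A B : EffAlg) (a : A) (b b' c : B) : ea_sum B b b' = Some c ->
  ea_sum (bf_obj G A B) (kan_fun a b) (kan_fun a b') = Some (kan_fun a c).
Proof.
case/ea_sum_image3 => F [X [Y [XY <- <- <-]]].
rewrite -(elt_hom0 a) !kan_fun_rect; apply/eh_sum/eh_sum.
exact: rect_additive_r.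
Qed.

Definition kan_bim (A B : EffAlg) : EABimor A B (bf_obj G A B) :=
  Build_EABimor (kan_fun_one A B) (@kan_fun_l A B) (@kan_fun_r A B).

Definition kan_factor (A B : EffAlg) : EAHom (tens T A B) (bf_obj G A B) :=
  tlift T (kan_bim A B).

Lemma kan_factor_natural : NatEA (tensorPF T) G kan_factor.
Proof.
move=> A A' B B' f g y.
suff ext : EAcomp (kan_factor A' B') (tmap T f g) =1 EAcomp (bf_map G f g) (kan_factor A B).
  exact: ext.
apply: tens_hom_ext => a b /=.
rewrite tmap_tau !tlift_tau /= /kan_fun -G_comp.
by apply: G_ext => ?; apply: elt_hom_comp.
Qed.

Lemma kan_factor_eta n m x : alpha n m x = kan_factor _ _ (tens_eta C T n m x).
Proof.
move: x; apply: additive_ext => [||z]; first exact: eh_additive.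
  by apply: additive_comp; apply: eh_additive.
have [i [j ->]] := set1_rect z.
rewrite tens_eta_atom tlift_tau.
rewrite -[RHS]/(kan_fun (EAid (BoolEA n) [set i]) (EAid (BoolEA m) [set j])).
by rewrite kan_fun_rect G_id.
Qed.

Lemma kan_factor_uniq (s : forall A B, EAHom (tens T A B) (bf_obj G A B)) :
  NatEA (tensorPF T) G s -> (forall n m x, alpha n m x = s _ _ (tens_eta C T n m x)) ->
  forall A B, s A B =1 kan_factor A B.
Proof.
move=> s_nat s_eta A B; apply: tlift_uniq => a b.
rewrite -[in LHS](elt_hom0 a) -[in LHS](elt_hom0 b) -tmap_tau.
by rewrite (s_nat _ _ _ _ (elt_hom a) (elt_hom b)) -(tens_eta_rect C) -s_eta.
Qed.

End KanFactor.

Theorem mainTheorem7 (C : FBCoproduct) (T : EATensor) :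
  exists eta : forall n m, EAHom (BoolEA (cp C n m)) (tens T (BoolEA n) (BoolEA m)),
    NatFB C (tensorPF T) eta /\ IsLeftKan C (tensorPF T) eta.
Proof.
exists (tens_eta C T); split; first exact: tens_eta_natural.
move=> G G_bif alpha alpha_nat; exists (kan_factor T G_bif alpha_nat); split.
  exact: kan_factor_natural.
split; first exact: kan_factor_eta.
by move=> s s_nat s_eta A B; apply: kan_factor_uniq.
Qed.
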